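(* Let $X$ be a nonsingular projective toric variety. If $\beta\in H_2(X,\mathbb{Z})$ satisfies $\int_\beta A>0$ for every ample divisor $A$, then the set $\{D \text{ toric divisor} : \int_\beta D>0\}$ contains a primitive set.
   Context: Toric divisors are the torus-invariant prime divisors of $X$. A primitive set is a set $\{D_1,\ldots,D_k\}$ of toric divisors with $D_1\cap\cdots\cap D_k=\emptyset$ such that every proper subset has nonempty intersection. *)

(* Combinatorial model of a nonsingular projective toric
   variety X = X_Sigma via its fan Sigma in N_Q = Q^d, N = Z^d. *)
From HB Require Import structures.
From mathcomp Require Import all_boot all_order all_algebra.
Set Implicit Arguments. Unset Strict Implicit. Unset Printing Implicit Defensive.
Import Order.TTheory GRing.Theory Num.Theory.
Local Open Scope ring_scope.

Section Toric.
Variables (d n : nat).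
(* v i : primitive generator in N = Z^d of the i-th ray; toric divisor D_i. *)
Variable v : 'I_n -> 'rV[int]_d.
(* The fan: cones are encoded by the sets of indices of their rays. *)
Variable Sigma : {set {set 'I_n}}.

Definition vQ (i : 'I_n) : 'rV[rat]_d := map_mx (fun z : int => z%:~R) (v i).

Definition cone (S : {set 'I_n}) (x : 'rV[rat]_d) : Prop :=
  exists lam : 'I_n -> rat,
    (forall i, 0 <= lam i) /\ (forall i, i \notin S -> lam i = 0) /\
    x = \sum_(i < n) lam i *: vQ i.

Definition smooth_cone (S : {set 'I_n}) : Prop :=
  exists (B : 'M[int]_d) (g : 'I_n -> 'I_d),
    B \in unitmx /\ {in S &, injective g} /\
    (forall i, i \in S -> row (g i) B = v i).

Definition is_fan : Prop :=
  [/\ (forall S T : {set 'I_n}, S \in Sigma -> T \subset S -> T \in Sigma),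
      (forall i : 'I_n, [set i] \in Sigma) &
      (forall S T : {set 'I_n}, S \in Sigma -> T \in Sigma ->
         forall x, (cone S x /\ cone T x) <-> cone (S :&: T) x)].

Definition smooth_fan : Prop := forall S : {set 'I_n}, S \in Sigma -> smooth_cone S.

Definition complete_fan : Prop :=
  forall x : 'rV[rat]_d, exists2 S, S \in Sigma & cone S x.

Definition maximal_cone (S : {set 'I_n}) : Prop :=
  S \in Sigma /\ (forall T : {set 'I_n}, T \in Sigma -> S \subset T -> T = S).

Definition pairing (m : 'rV[rat]_d) (u : 'rV[rat]_d) : rat :=
  \sum_(k < d) m 0 k * u 0 k.

(* The torus-invariant divisor D = sum_i c i * D_i is ample iff its support
   function is strictly convex: for every maximal cone sigma there is m_sigma
   with <m_sigma, v_i> = - c_i for i in sigma and <m_sigma, v_j> > - c_j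
   for j not in sigma (Cox-Little-Schenck, Lemma 6.1.13/Thm 6.1.14). *)
Definition ample (c : 'I_n -> int) : Prop :=
  forall S : {set 'I_n}, maximal_cone S ->
    exists m : 'rV[rat]_d,
      (forall i, i \in S -> pairing m (vQ i) = - (c i)%:~R) /\
      (forall j, j \notin S -> - (c j)%:~R < pairing m (vQ j)).

Definition projective_fan : Prop := exists c, ample c.

Definition smooth_projective_toric : Prop :=
  [/\ is_fan, smooth_fan, complete_fan & projective_fan].

(* H_2(X,Z) = { beta in Z^n : sum_i beta_i v_i = 0 }, with int_beta D_i = beta i *)
Definition curve_class (beta : 'I_n -> int) : Prop :=
  \sum_(i < n) beta i *: v i = 0.

Definition intersect (beta c : 'I_n -> int) : int := \sum_(i < n) c i * beta i.

(* D_{i1} cap ... cap D_{ik} is nonempty iff {i1..ik} spans a cone of Sigma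
   (orbit-cone correspondence). *)
Definition nonempty_intersection (P : {set 'I_n}) : Prop := P \in Sigma.

Definition primitive_set (P : {set 'I_n}) : Prop :=
  ~ nonempty_intersection P /\
  (forall Q : {set 'I_n}, Q \proper P -> nonempty_intersection Q).

End Toric.

(* If the support [P] of the positive part of [beta] is not a cone of the fan,
   a minimal subset of [P] that is not a cone is a primitive set.  Otherwise
   [P] lies in a maximal cone [S]; for an ample [c], the linear form [m_S]
   of its support function satisfies [c_i + <m_S, v_i> = 0] on [S] and
   [> 0] off [S], while [beta <= 0] off [S].  As [beta] is a relation among
   the [v_i], [int_beta c = sum_i beta_i (c_i + <m_S, v_i>) <= 0],
   contradicting positivity on ample divisors. *)
From mathcomp Require Import all_boot all_order all_algebra.
Set Implicit Arguments. Unset Strict Implicit.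
Import Order.TTheory GRing.Theory Num.Theory.
Local Open Scope ring_scope.

Section Cones.
Variables (n : nat) (Sigma : {set {set 'I_n}}).

Lemma primitive_subset (P : {set 'I_n}) :
  P \notin Sigma -> exists2 Q, primitive_set Sigma Q & Q \subset P.
Proof.
move=> PnS.
pose notcone (Q : {set 'I_n}) := (Q \subset P) && (Q \notin Sigma).
have notconeP : notcone P by rewrite /notcone subxx.
have [Q /andP[QP QnS] Qmin] := arg_minnP (fun Q : {set 'I_n} => #|Q|) notconeP.
exists Q => //; split; first exact/negP.
move=> R RQ; apply/negPn/negP => RnS.
have RP : R \subset P := subset_trans (proper_sub RQ) QP.
by have := Qmin R; rewrite /notcone RP RnS leqNgt proper_card // => /(_ isT).
Qed.

Lemma maximal_cone_ext (P : {set 'I_n}) :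
  P \in Sigma -> exists2 S, maximal_cone Sigma S & P \subset S.
Proof.
move=> PS.
pose above (Q : {set 'I_n}) := (P \subset Q) && (Q \in Sigma).
have aboveP : above P by rewrite /above subxx.
have [S /andP[PS' SS] Smax] := arg_maxnP (fun Q : {set 'I_n} => #|Q|) aboveP.
exists S => //; split => // T TS ST.
apply/eqP; rewrite eq_sym eqEcard ST.
by apply: Smax; rewrite /above TS (subset_trans PS').
Qed.

End Cones.

Section Intersection.
Variables (d n : nat) (v : 'I_n -> 'rV[int]_d) (Sigma : {set {set 'I_n}}).
Variable beta : 'I_n -> int.
Hypothesis beta_curve : curve_class v beta.

Lemma curve_class_pairing (m : 'rV[rat]_d) :
  \sum_(i < n) (beta i)%:~R * pairing m (vQ v i) = 0 :> rat.
Proof.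
rewrite /pairing; under eq_bigr do rewrite big_distrr /=.
rewrite exchange_big big1 // => k _.
transitivity (m 0 k * ((\sum_(i < n) beta i *: v i) 0 k)%:~R).
  rewrite summxE rmorph_sum big_distrr; apply: eq_bigr => i _.
  by rewrite /vQ !mxE /= intrM mulrCA.
by move: beta_curve; rewrite /curve_class => ->; rewrite mxE mulr0.
Qed.

Lemma intersect_shift (c : 'I_n -> int) (m : 'rV[rat]_d) :
  (intersect beta c)%:~R
  = \sum_(i < n) (beta i)%:~R * ((c i)%:~R + pairing m (vQ v i)) :> rat.
Proof.
under [RHS]eq_bigr do rewrite mulrDr.
rewrite big_split /= curve_class_pairing addr0 rmorph_sum.
by apply: eq_bigr => i _; rewrite rmorphM mulrC.
Qed.

Lemma intersect_ample_le0 (c : 'I_n -> int) (S : {set 'I_n}) :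
  ample v Sigma c -> maximal_cone Sigma S ->
  (forall i, i \notin S -> beta i <= 0) -> intersect beta c <= 0.
Proof.
move=> c_ample S_max beta_le0.
have [m [m_on m_off]] := c_ample S S_max.
rewrite -(lerz0 rat) (intersect_shift c m).
apply: sumr_le0 => i _; have [iS | iNS] := boolP (i \in S).
  by rewrite m_on // addrN mulr0.
rewrite mulr_le0_ge0 ?lerz0 ?beta_le0 // ltW //.
by rewrite -ltrBlDl sub0r m_off.
Qed.

End Intersection.

Theorem corollary2p2 (d n : nat) (v : 'I_n -> 'rV[int]_d)
    (Sigma : {set {set 'I_n}}) :
  smooth_projective_toric v Sigma ->
  forall beta : 'I_n -> int, curve_class v beta ->
  (forall c : 'I_n -> int, ample v Sigma c -> 0 < intersect beta c) ->
  exists P : {set 'I_n},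
    primitive_set Sigma P /\ P \subset [set i | 0 < beta i].
Proof.
move=> [_ _ _ [c c_ample]] beta beta_curve beta_pos.
have [PS | PnS] := boolP ([set i | 0 < beta i] \in Sigma); last first.
  by have [Q] := primitive_subset PnS; exists Q.
have [S S_max PsubS] := maximal_cone_ext PS.
have beta_le0 i : i \notin S -> beta i <= 0.
  rewrite leNgt; apply: contra => beta_gt0.
  by apply: (subsetP PsubS); rewrite inE.
have := intersect_ample_le0 beta_curve c_ample S_max beta_le0.
by rewrite leNgt beta_pos.
Qed.
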